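(* For every finite label set $\Delta$ there is an MSO formula $\Psi(X)$ over $(\Sigma,\Delta)$ ($\Sigma$ a singleton) with one free second-order variable $X$ such that for every Cayley graph $G$ of a finitely generated group with generating set labeled by $\Delta$, and every assignment $\alpha$, $(G,\alpha)\models\Psi(X)$ if and only if $\alpha(X)$ is an infinite set of vertices.
   Context: The Cayley graph of a finitely generated group $\Gamma$ with finite generating set $\Delta$ (closed under inverses) is the labeled graph with vertex set $\Gamma$, a single vertex label, and edge relations $E_\delta=\{(\gamma,\gamma\delta):\gamma\in\Gamma\}$ for $\delta\in\Delta$. MSO formulas over $(\Sigma,\Delta)$: first-order (vertex) and second-order (vertex set) variables, atomic formulas $x\,L\,\sigma$, $x\,E_\delta\,x'$ (there is a $\delta$-edge from $x$ to $x'$), $x=x'$, $x\in X$, Boolean connectives and quantifiers over both kinds, standard semantics. *)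

From Stdlib Require Import List PeanoNat.
From mathcomp Require Import all_boot.

Record AbsGroup := {
  carrier :> Type;
  gmul : carrier -> carrier -> carrier;
  gone : carrier;
  ginv : carrier -> carrier;
  gmulA : forall x y z, gmul x (gmul y z) = gmul (gmul x y) z;
  gmul1l : forall x, gmul gone x = x;
  gmul1r : forall x, gmul x gone = x;
  gmulVl : forall x, gmul (ginv x) x = gone;
  gmulVr : forall x, gmul x (ginv x) = gone
}.


Definition is_subgroup {G : AbsGroup} (P : G -> Prop) : Prop :=
  P (gone G) /\ (forall x y, P x -> P y -> P (gmul G x y)) /\
  (forall x, P x -> P (ginv G x)).

Definition generates {G : AbsGroup} (S : G -> Prop) : Prop :=
  forall P : G -> Prop, is_subgroup P -> (forall s, S s -> P s) -> forall g, P g.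

Definition labelled_generating_set {G : AbsGroup} {Delta : finType}
  (gen : Delta -> G) : Prop :=
  injective gen /\
  (forall d, exists d', gen d' = ginv G (gen d)) /\
  generates (fun g => exists d, gen d = g).

(* First-order variables and second-order variables are both indexed by nat,
   in separate namespaces. *)
Inductive mso (Sigma Delta : Type) : Type :=
| FLab : nat -> Sigma -> mso Sigma Delta
| FEdge : Delta -> nat -> nat -> mso Sigma Delta
| FEq : nat -> nat -> mso Sigma Delta
| FIn : nat -> nat -> mso Sigma Delta
| FNot : mso Sigma Delta -> mso Sigma Delta
| FAnd : mso Sigma Delta -> mso Sigma Delta -> mso Sigma Delta
| FOr : mso Sigma Delta -> mso Sigma Delta -> mso Sigma Delta
| FEx1 : nat -> mso Sigma Delta -> mso Sigma Delta
| FAll1 : nat -> mso Sigma Delta -> mso Sigma Delta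
| FEx2 : nat -> mso Sigma Delta -> mso Sigma Delta
| FAll2 : nat -> mso Sigma Delta -> mso Sigma Delta.

Arguments FLab {Sigma Delta}.
Arguments FEdge {Sigma Delta}.
Arguments FEq {Sigma Delta}.
Arguments FIn {Sigma Delta}.
Arguments FNot {Sigma Delta}.
Arguments FAnd {Sigma Delta}.
Arguments FOr {Sigma Delta}.
Arguments FEx1 {Sigma Delta}.
Arguments FAll1 {Sigma Delta}.
Arguments FEx2 {Sigma Delta}.
Arguments FAll2 {Sigma Delta}.

Fixpoint fo_free {Sigma Delta : Type} (f : mso Sigma Delta) (n : nat) : Prop :=
  match f with
  | FLab x _ => n = x
  | FEdge _ x y => n = x \/ n = y
  | FEq x y => n = x \/ n = y
  | FIn x _ => n = x
  | FNot g => fo_free g n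
  | FAnd g h => fo_free g n \/ fo_free h n
  | FOr g h => fo_free g n \/ fo_free h n
  | FEx1 x g => n <> x /\ fo_free g n
  | FAll1 x g => n <> x /\ fo_free g n
  | FEx2 _ g => fo_free g n
  | FAll2 _ g => fo_free g n
  end.

Fixpoint so_free {Sigma Delta : Type} (f : mso Sigma Delta) (n : nat) : Prop :=
  match f with
  | FLab _ _ => False
  | FEdge _ _ _ => False
  | FEq _ _ => False
  | FIn _ X => n = X
  | FNot g => so_free g n
  | FAnd g h => so_free g n \/ so_free h n
  | FOr g h => so_free g n \/ so_free h n
  | FEx1 _ g => so_free g n
  | FAll1 _ g => so_free g n
  | FEx2 X g => n <> X /\ so_free g n
  | FAll2 X g => n <> X /\ so_free g n
  end.

Definition upd {A : Type} (a : nat -> A) (x : nat) (v : A) : nat -> A :=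
  fun n => if Nat.eqb n x then v else a n.

Record labelled_graph (Sigma Delta : Type) := {
  vertex : Type;
  vlabel : vertex -> Sigma;
  edge : Delta -> vertex -> vertex -> Prop
}.
Arguments vertex {Sigma Delta}.
Arguments vlabel {Sigma Delta}.
Arguments edge {Sigma Delta}.

Fixpoint sat {Sigma Delta : Type} (Gr : labelled_graph Sigma Delta)
  (a1 : nat -> vertex Gr) (a2 : nat -> vertex Gr -> Prop)
  (f : mso Sigma Delta) : Prop :=
  match f with
  | FLab x s => vlabel Gr (a1 x) = s
  | FEdge d x y => edge Gr d (a1 x) (a1 y)
  | FEq x y => a1 x = a1 y
  | FIn x X => a2 X (a1 x)
  | FNot g => ~ sat Gr a1 a2 g
  | FAnd g h => sat Gr a1 a2 g /\ sat Gr a1 a2 h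
  | FOr g h => sat Gr a1 a2 g \/ sat Gr a1 a2 h
  | FEx1 x g => exists v, sat Gr (upd a1 x v) a2 g
  | FAll1 x g => forall v, sat Gr (upd a1 x v) a2 g
  | FEx2 X g => exists S, sat Gr a1 (upd a2 X S) g
  | FAll2 X g => forall S, sat Gr a1 (upd a2 X S) g
  end.

Definition cayley_graph {G : AbsGroup} {Delta : Type} (gen : Delta -> G)
  : labelled_graph unit Delta :=
  {| vertex := carrier G;
     vlabel := fun _ => tt;
     edge := fun d x y => y = gmul G x (gen d) |}.

Definition finite_set {V : Type} (A : V -> Prop) : Prop :=
  exists l : list V, forall v, A v -> List.In v l.

Definition infinite_set {V : Type} (A : V -> Prop) : Prop := ~ finite_set A.

(* A set X of vertices is finite iff it is contained in a set Y with a finite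
   "breadth-first certificate": a root r in Y and a 3-colouring of Y such that,
   calling an edge from colour i to colour i+1 (mod 3) an ascending step, every
   vertex of Y is reachable from r by ascending steps inside Y, and every
   nonempty subset of Y has an element with no ascending step inside the subset.
   Both conditions are monadic second-order.  Since a Cayley graph has finite
   degree, König's lemma makes any such Y finite.  Conversely a finite X lies in
   a ball around 1, and colouring the ball by word length modulo 3 is a
   certificate: the colours orient each edge away from the root, which MSO
   cannot do with the bare (symmetric) neighbourhood relation. *)
From Stdlib Require Import Classical ClassicalEpsilon Relations Wf_nat.
From mathcomp Require Import all_boot zify.

Lemma In_enum {T : finType} (x : T) : List.In x (enum T).
Proof.
have : x \in enum T by rewrite mem_enum.
elim: (enum T) => [|y s IHs] //=; rewrite in_cons => /orP [/eqP ->|/IHs]; auto.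
Qed.

Lemma finite_set_sub {V : Type} {A B : V -> Prop} :
  (forall v, A v -> B v) -> finite_set B -> finite_set A.
Proof. by move=> AB [l Bl]; exists l => v /AB /Bl. Qed.

Lemma finite_set_bigcup {U V : Type} (l : list U) (F : U -> V -> Prop) :
  (forall x, List.In x l -> finite_set (F x)) ->
  finite_set (fun v => exists x, List.In x l /\ F x v).
Proof.
elim: l => [|x l IHl] finF; first by exists nil => v [y []].
have [lx Fx] := finF x (or_introl erefl).
have [ll Fl] := IHl (fun y ly => finF y (or_intror ly)).
exists (lx ++ ll) => v [y [[<-|ly] Fyv]]; apply: List.in_or_app; [left|right]; auto.
by apply: Fl; exists y.
Qed.

Section RootedNoetherian.
Context {V : Type} (R : V -> V -> Prop).

Definition closed_within (Y S : V -> Prop) :=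
  forall v w, S v -> Y w -> R v w -> S w.

Definition spanned_from (Y : V -> Prop) (r : V) :=
  forall S, S r -> closed_within Y S -> forall v, Y v -> S v.

Definition noetherian_on (Y : V -> Prop) :=
  forall S, (forall v, S v -> Y v) -> (exists v, S v) ->
  exists v, S v /\ forall w, S w -> ~ R v w.

Definition rooted_noetherian (Y : V -> Prop) (r : V) :=
  Y r /\ spanned_from Y r /\ noetherian_on Y.

Variable Y : V -> Prop.

Definition step_within v w := Y w /\ R v w.
Notation reach := (clos_refl_trans V step_within).

Lemma spanned_reach r : spanned_from Y r -> forall v, Y v -> reach r v.
Proof.
move=> spanY; apply: spanY => [|v w rv Yw Rvw]; first exact: rt_refl.
by apply: rt_trans rv (rt_step _ _ _ _ _).
Qed.

Hypothesis finite_branching : forall v, finite_set (R v).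

Lemma finite_reach_of_succ v :
  (forall w, step_within v w -> finite_set (reach w)) -> finite_set (reach v).
Proof.
move=> fin_succ; have [l Rl] := finite_branching v.
have [L HL] : finite_set (fun u => exists w, List.In w l /\ (step_within v w /\ reach w u)).
  apply: finite_set_bigcup => w _; have [vw|nvw] := classic (step_within v w).
  - by apply: finite_set_sub (fin_succ w vw) => u [].
  - by exists nil => u [].
exists (v :: L) => u vu; case: (clos_rt_rt1n _ _ _ _ vu) => [|w u' vw wu]; [left|right] => //.
by apply: HL; exists w; split; [apply: Rl; case: vw| split=> //; apply: clos_rt1n_rt].
Qed.

Lemma noetherian_finite_reach :
  noetherian_on Y -> forall v, Y v -> finite_set (reach v).
Proof.
move=> noethY v0 Yv0; apply: NNPP => infv0.
have [v [[Yv infv] maxv]] :=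
  noethY (fun v => Y v /\ ~ finite_set (reach v)) (fun v => @proj1 _ _) (ex_intro _ v0 (conj Yv0 infv0)).
apply/infv/finite_reach_of_succ => w [Yw Rvw]; apply: NNPP => infw.
exact: maxv w (conj Yw infw) Rvw.
Qed.

Lemma rooted_noetherian_finite r : rooted_noetherian Y r -> finite_set Y.
Proof.
move=> [Yr [spanY noethY]].
apply: finite_set_sub (noetherian_finite_reach noethY r Yr).
exact: spanned_reach.
Qed.

End RootedNoetherian.
Arguments rooted_noetherian_finite {V R Y}.

Lemma or_notl_iff_imp (A B : Prop) : ~ A \/ B <-> (A -> B).
Proof. by split; [tauto | case: (classic A); tauto]. Qed.

Section Formula.
Context {Sigma Delta : Type}.
Implicit Types f g : mso Sigma Delta.

Definition FImp f g := FOr (FNot f) g.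

Definition FSub (X Y : nat) : mso Sigma Delta := FAll1 1 (FImp (FIn 1 X) (FIn 1 Y)).

Lemma sat_FSub Gr a1 a2 X Y :
  sat Gr a1 a2 (FSub X Y) <-> forall v, a2 X v -> a2 Y v.
Proof. by rewrite /FSub /= /upd /=; setoid_rewrite or_notl_iff_imp. Qed.

End Formula.

Section CertificateFormula.
Context {Delta : finType}.

(* The syntax has no constant formulas; [~ x = x] serves as falsum. *)
Definition FAdj (x y : nat) : mso unit Delta :=
  foldr (fun d f => FOr (FEdge d x y) f) (FNot (FEq x x)) (enum Delta).

(* Second-order variables: 0 = X, 1 = Y, 2 = S, 3 4 5 = the colour classes;
   first-order variable 0 is the root. *)
Definition FAscend : mso unit Delta :=
  FAnd (FAdj 1 2) (FOr (FAnd (FIn 1 3) (FIn 2 4))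
                  (FOr (FAnd (FIn 1 4) (FIn 2 5)) (FAnd (FIn 1 5) (FIn 2 3)))).

Definition FClosed : mso unit Delta :=
  FAll1 1 (FAll1 2 (FImp (FAnd (FIn 1 2) (FAnd (FIn 2 1) FAscend)) (FIn 2 2))).

Definition FSpanned : mso unit Delta :=
  FAll2 2 (FImp (FIn 0 2) (FImp FClosed (FSub 1 2))).

Definition FNoetherian : mso unit Delta :=
  FAll2 2 (FImp (FAnd (FSub 2 1) (FEx1 1 (FIn 1 2)))
                (FEx1 1 (FAnd (FIn 1 2) (FAll1 2 (FImp (FIn 2 2) (FNot FAscend)))))).

Definition FInfinite : mso unit Delta :=
  FNot (FEx2 1 (FAnd (FSub 0 1)
    (FEx2 3 (FEx2 4 (FEx2 5 (FEx1 0 (FAnd (FIn 0 1) (FAnd FSpanned FNoetherian)))))))).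

Lemma FInfinite_fo_closed n : ~ fo_free FInfinite n.
Proof.
have : fo_free (FAdj 1 2) n -> n = 1 \/ n = 2.
  by rewrite /FAdj; elim: (enum Delta) => [|d s IHs] /=; intuition.
by rewrite /FInfinite /FNoetherian /FSpanned /FClosed /FAscend /FSub /FImp /=; intuition.
Qed.

Lemma FInfinite_so_free n : so_free FInfinite n -> n = 0.
Proof.
have : ~ so_free (FAdj 1 2) n by rewrite /FAdj; elim: (enum Delta) => [|d s IHs] /=; tauto.
by rewrite /FInfinite /FNoetherian /FSpanned /FClosed /FAscend /FSub /FImp /=; intuition.
Qed.

Definition ascending (Gr : labelled_graph unit Delta) (C0 C1 C2 : vertex Gr -> Prop) v w :=
  (exists d, edge Gr d v w) /\
  ((C0 v /\ C1 w) \/ (C1 v /\ C2 w) \/ (C2 v /\ C0 w)).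

Variable Gr : labelled_graph unit Delta.

Lemma sat_FAdj a1 a2 x y :
  sat Gr a1 a2 (FAdj x y) <-> exists d, edge Gr d (a1 x) (a1 y).
Proof.
suff adjP s : sat Gr a1 a2 (foldr (fun d f => FOr (FEdge d x y) f) (FNot (FEq x x)) s)
    <-> exists d, List.In d s /\ edge Gr d (a1 x) (a1 y).
  by rewrite adjP; split=> [[d []]|[d ?]]; eauto using In_enum.
elim: s => [|d s IHs] /=; first by split=> [[]|[? [[]]]].
rewrite IHs; split=> [[?|[d' []]]|[d' [[<-|?] ?]]]; eauto.
Qed.

Lemma sat_FAscend a1 a2 :
  sat Gr a1 a2 FAscend <-> ascending Gr (a2 3) (a2 4) (a2 5) (a1 1) (a1 2).
Proof. by rewrite /FAscend /= sat_FAdj. Qed.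

Lemma sat_FClosed a1 a2 :
  sat Gr a1 a2 FClosed <-> closed_within (ascending Gr (a2 3) (a2 4) (a2 5)) (a2 1) (a2 2).
Proof.
rewrite /FClosed; cbn -[FAscend]; setoid_rewrite or_notl_iff_imp.
setoid_rewrite sat_FAscend; cbn.
by split=> H v w; move: (H v w); tauto.
Qed.

Lemma sat_FSpanned a1 a2 :
  sat Gr a1 a2 FSpanned <-> spanned_from (ascending Gr (a2 3) (a2 4) (a2 5)) (a2 1) (a1 0).
Proof.
rewrite /FSpanned; cbn -[FClosed FSub]; setoid_rewrite or_notl_iff_imp.
setoid_rewrite sat_FClosed; setoid_rewrite sat_FSub; setoid_rewrite or_notl_iff_imp.
by cbn.
Qed.

Lemma sat_FNoetherian a1 a2 :
  sat Gr a1 a2 FNoetherian <-> noetherian_on (ascending Gr (a2 3) (a2 4) (a2 5)) (a2 1).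
Proof.
rewrite /FNoetherian; cbn -[FAscend FSub]; setoid_rewrite or_notl_iff_imp.
setoid_rewrite sat_FSub; setoid_rewrite sat_FAscend; cbn.
setoid_rewrite or_notl_iff_imp; rewrite /noetherian_on.
by split=> [H S SY ne | H S [SY ne]]; [exact: H (conj SY ne) | exact: H S SY ne].
Qed.

Lemma sat_FInfinite a1 a2 :
  sat Gr a1 a2 FInfinite <-> ~ exists Y, (forall v, a2 0 v -> Y v) /\
    exists C0 C1 C2 r, rooted_noetherian (ascending Gr C0 C1 C2) Y r.
Proof.
rewrite /FInfinite; cbn -[FSub FSpanned FNoetherian].
by setoid_rewrite sat_FSub; setoid_rewrite sat_FSpanned; setoid_rewrite sat_FNoetherian.
Qed.

End CertificateFormula.

Section GroupFacts.
Context {G : AbsGroup}.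
Local Notation "x * y" := (gmul G x y).

Lemma ginv_mul x y : ginv G (x * y) = ginv G y * ginv G x.
Proof.
have xyK : (x * y) * (ginv G y * ginv G x) = gone G.
  by rewrite -gmulA (gmulA _ y) gmulVr gmul1l gmulVr.
have := f_equal (gmul G (ginv G (x * y))) xyK.
by rewrite gmulA gmulVl gmul1l gmul1r => ->.
Qed.

Lemma ginv1 : ginv G (gone G) = gone G.
Proof. by rewrite -[LHS]gmul1r gmulVl. Qed.

End GroupFacts.

Section CayleyGraph.
Context {G : AbsGroup} {D : finType} (gen : D -> G).
Local Notation "x * y" := (gmul G x y).

Definition eval_word (l : seq D) : G := foldr (fun d g => gen d * g) (gone G) l.

Lemma eval_word_cat l1 l2 : eval_word (l1 ++ l2) = eval_word l1 * eval_word l2.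
Proof. by elim: l1 => [|d l IHl] /=; rewrite ?gmul1l // IHl gmulA. Qed.

Lemma eval_word_rcons l d : eval_word (rcons l d) = eval_word l * gen d.
Proof. by rewrite -cats1 eval_word_cat /= gmul1r. Qed.

Definition is_word_length (g : G) (n : nat) :=
  (exists l, size l = n /\ g = eval_word l) /\ forall l, g = eval_word l -> n <= size l.

(* Only meaningful for [g] in the span of [gen]; [0] is an arbitrary default. *)
Definition word_length (g : G) : nat := epsilon (inhabits 0) (is_word_length g).

Lemma cayley_finite_branching (C0 C1 C2 : G -> Prop) (v : G) :
  finite_set (ascending (cayley_graph gen) C0 C1 C2 v).
Proof.
exists (List.map (fun d => v * gen d) (enum D)) => _ [[d ->] _].
exact: (List.in_map (fun d => v * gen d) _ d (In_enum d)).
Qed.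

Hypothesis gen_ok : labelled_generating_set gen.

Lemma eval_word_surj g : exists l, g = eval_word l.
Proof.
case: gen_ok => _ [gen_inv gen_span].
apply: (gen_span (fun g => exists l, g = eval_word l)) => [|_ [d <-]].
- split; first by exists nil.
  split=> [_ _ [l1 ->] [l2 ->] | _ [l ->]]; first by exists (l1 ++ l2); rewrite eval_word_cat.
  elim/last_ind: l => [|l d [l' l'E]]; first by exists nil; rewrite /= ginv1.
  have [d' d'E] := gen_inv d.
  by exists (d' :: l'); rewrite eval_word_rcons ginv_mul /= -l'E d'E.
- by exists [:: d]; rewrite /= gmul1r.
Qed.

Lemma word_length_spec g : is_word_length g (word_length g).
Proof.
apply: epsilon_spec.
have [|n [[Pn nmin] _]] := dec_inh_nat_subset_has_unique_least_element
  (fun n => exists l, size l = n /\ g = eval_word l) (fun n => classic _).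
  by have [l gl] := eval_word_surj g; exists (size l), l.
by exists n; split=> // l gl; apply/leP/nmin; exists l.
Qed.

Lemma word_length_le g l : g = eval_word l -> word_length g <= size l.
Proof. exact: (word_length_spec g).2. Qed.

Lemma word_length1 : word_length (gone G) = 0.
Proof. by apply/eqP; rewrite -leqn0; apply: (word_length_le _ nil). Qed.

Lemma word_length_mulg g d : word_length (g * gen d) <= (word_length g).+1.
Proof.
have [[l [<- ->]] _] := word_length_spec g.
by rewrite -(size_rcons l d); apply: word_length_le; rewrite eval_word_rcons.
Qed.

Lemma word_length_mulg_ge g d : word_length g <= (word_length (g * gen d)).+1.
Proof.
have [d' d'E] := gen_ok.2.1 d.
have gE : g = (g * gen d) * gen d' by rewrite d'E -gmulA gmulVr gmul1r.
by rewrite {1}gE; apply: word_length_mulg.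
Qed.

Lemma word_length_pred {g n} :
  word_length g = n.+1 -> exists g' d, g = g' * gen d /\ word_length g' = n.
Proof.
move=> gn; have [[l [lsize gE]] _] := word_length_spec g.
rewrite gn in lsize; case/lastP: l lsize gE => [|l d] //.
rewrite size_rcons eval_word_rcons => /eq_add_S lE gE.
exists (eval_word l), d; split=> //.
have := word_length_le _ _ (erefl (eval_word l)).
have := word_length_mulg (eval_word l) d.
by rewrite -gE gn lE; lia.
Qed.

Definition ball (N : nat) (v : G) := word_length v <= N.

Definition ascend_level :=
  ascending (cayley_graph gen) (fun v => word_length v %% 3 = 0)
    (fun v => word_length v %% 3 = 1) (fun v => word_length v %% 3 = 2).

Lemma ascend_level_succ {v w} : ascend_level v w -> word_length w = (word_length v).+1.
Proof.
by move=> [[d /= ->]]; have := word_length_mulg v d; have := word_length_mulg_ge v d; lia.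
Qed.

Lemma ascend_level_mulg g d :
  word_length (g * gen d) = (word_length g).+1 -> ascend_level g (g * gen d).
Proof. by move=> gdE; split; [exists d | rewrite gdE; lia]. Qed.

Lemma ball_spanned N : spanned_from ascend_level (ball N) (gone G).
Proof.
move=> S S1 closedS v; rewrite /ball.
elim: {v}(word_length v) {-2}v (erefl (word_length v)) => [|n IHn] v vn vN.
- have [[l [l0 ->]] _] := word_length_spec v.
  by move: l0; rewrite vn => /size0nil ->.
- have [g [d [vE gn]]] := word_length_pred vn; subst v.
  apply: (closedS g); [apply: IHn; lia | rewrite /ball; lia |].
  by apply: ascend_level_mulg; rewrite vn gn.
Qed.

Lemma ball_noetherian N : noetherian_on ascend_level (ball N).
Proof.
move=> S SN [v0 Sv0]; apply: NNPP => noMax.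
have climb k : exists v, S v /\ k <= word_length v.
  elim: k => [|k [v [Sv kv]]]; first by exists v0.
  have [w wE] : exists w, ~ (S w -> ~ ascend_level v w).
    by apply: not_all_ex_not => vmax; apply: noMax; exists v.
  have [Sw /NNPP vw] := imply_to_and _ _ wE.
  by exists w; split=> //; rewrite (ascend_level_succ vw).
have [v [Sv Nv]] := climb N.+1; have := SN v Sv; rewrite /ball; lia.
Qed.

Lemma ball_rooted_noetherian N : rooted_noetherian ascend_level (ball N) (gone G).
Proof.
split; last by split; [apply: ball_spanned | apply: ball_noetherian].
by rewrite /ball word_length1.
Qed.

Lemma finite_set_in_ball {X : G -> Prop} : finite_set X -> exists N, forall v, X v -> ball N v.
Proof.
move=> [l Xl]; suff [N lN] : exists N, forall v, List.In v l -> ball N v.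
  by exists N => v /Xl /lN.
elim: l {Xl} => [|x l [N lN]]; first by exists 0.
exists (maxn (word_length x) N) => v [<-|vl]; rewrite /ball.
- exact: leq_maxl.
- exact: leq_trans (lN v vl) (leq_maxr _ _).
Qed.

End CayleyGraph.

Theorem mainTheorem9 :
  forall Delta : finType,
  exists Psi : mso unit Delta,
    (forall n, ~ fo_free Psi n) /\
    (forall n, so_free Psi n -> n = 0) /\
    forall (G : AbsGroup) (gen : Delta -> G),
      labelled_generating_set gen ->
      forall (a1 : nat -> G) (a2 : nat -> G -> Prop),
        sat (cayley_graph gen) a1 a2 Psi <-> infinite_set (a2 0).
Proof.
move=> Delta; exists FInfinite.
split; first exact: FInfinite_fo_closed.
split; first exact: FInfinite_so_free.
move=> G gen gen_ok a1 a2; rewrite sat_FInfinite; split.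
- move=> noCert finX; apply: noCert.
  have [N XN] := finite_set_in_ball gen finX.
  exists (ball gen N); split=> //; do 4 eexists.
  exact: ball_rooted_noetherian.
- move=> infX [Y [XY [C0 [C1 [C2 [r certY]]]]]]; apply/infX/(finite_set_sub XY).
  exact: rooted_noetherian_finite (cayley_finite_branching gen C0 C1 C2) r certY.
Qed.
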